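(* Fix an integer $k\ge2$. Consider real variables $\{d_{u,i}\}_{i\in[k]}$ and $\{d_{v,i}\}_{i\in[k]}$ subject to the constraints (1) $0\le d_{w,i}\le1$ for all $w\in\{u,v\}$, $i\in[k]$, and (2) $\sum_{i\in[k]}d_{w,i}=k-1$ for each $w\in\{u,v\}$. Then for any fixed feasible values $\{d^*_{u,i}\}_{i\in[k]}$, $\{d^*_{v,i}\}_{i\in[k]}$, there exist vectors $a_u,a_v\in\mathbb{R}^k$ with $\|a_u\|_2\le\sqrt{k/2}$ and $\|a_v\|_2\le\sqrt{k/2}$ such that, over all feasible values of the variables, the expression $$\sum_{i\in[k]}a_{u,i}d_{u,i}+\sum_{i\in[k]}a_{v,i}d_{v,i}+\frac12\sum_{i\in[k]}|d_{u,i}-d_{v,i}|$$ attains its minimum value at $\{d^*_{u,i}\}$, $\{d^*_{v,i}\}$ (not necessarily uniquely). *)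

From mathcomp Require Import all_boot all_order all_algebra.
Set Implicit Arguments. Unset Strict Implicit. Unset Printing Implicit Defensive.
Import Order.TTheory GRing.Theory Num.Theory.
Local Open Scope ring_scope.

Definition feasible (R : realFieldType) (k : nat) (d : 'I_k -> R) : Prop :=
  (forall i, 0 <= d i <= 1) /\ \sum_(i < k) d i = (k - 1)%:R.

Definition norm2 (R : rcfType) (k : nat) (a : 'I_k -> R) : R :=
  Num.sqrt (\sum_(i < k) a i ^+ 2).

Definition obj (R : realFieldType) (k : nat) (au av du dv : 'I_k -> R) : R :=
  \sum_(i < k) au i * du i + \sum_(i < k) av i * dv i
  + 2^-1 * \sum_(i < k) `|du i - dv i|.

(* Since |a_i| <= 1/2, both weight vectors have
   norm at most sqrt (k / 4). *)
From mathcomp Require Import all_boot all_order all_algebra.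
From mathcomp Require Import ring lra.
Import Order.TTheory GRing.Theory Num.Theory.
Local Open Scope ring_scope.

Lemma mulr_le_norm (R : realDomainType) (s y : R) : `|s| <= 1 -> s * y <= `|y|.
Proof.
move=> le_s1; apply: le_trans (ler_norm _) _.
by rewrite normrM ler_piMl ?normr_ge0.
Qed.

Lemma norm_sgr_le1 (R : numDomainType) (x : R) : `|Num.sg x| <= 1.
Proof. by rewrite normr_sg; case: (x != 0). Qed.

(* [s] is a subgradient of the absolute value at [x0 - y0]. *)
Lemma subgradient_weights_minimize (R : realFieldType) (s x0 y0 x y : R) :
  `|s| <= 1 -> `|x0 - y0| = s * (x0 - y0) ->
  - s / 2 * x0 + s / 2 * y0 + 2^-1 * `|x0 - y0|
  <= - s / 2 * x + s / 2 * y + 2^-1 * `|x - y|.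
Proof.
move=> le_s1 norm_x0y0.
have -> : - s / 2 * x0 + s / 2 * y0 + 2^-1 * `|x0 - y0| = 0.
  by rewrite norm_x0y0; field.
have -> : - s / 2 * x + s / 2 * y + 2^-1 * `|x - y|
          = 2^-1 * (`|x - y| - s * (x - y)) by field.
by rewrite mulr_ge0 ?invr_ge0 ?ler0n // subr_ge0 mulr_le_norm.
Qed.

Lemma objE (R : realFieldType) (k : nat) (au av du dv : 'I_k -> R) :
  obj au av du dv = \sum_(i < k) (au i * du i + av i * dv i + 2^-1 * `|du i - dv i|).
Proof. by rewrite /obj mulr_sumr -!big_split. Qed.

Lemma norm2_le_const (R : rcfType) (k : nat) (a : 'I_k -> R) (c : R) :
  (forall i, `|a i| <= c) -> norm2 a <= Num.sqrt (k%:R * c ^+ 2).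
Proof.
move=> le_a_c; rewrite /norm2 ler_wsqrtr //.
rewrite mulr_natl -[k in _ *+ k]card_ord -sumr_const; apply: ler_sum => i _.
rewrite -real_normK ?num_real // lerXn2r ?nnegrE //.
exact: le_trans (normr_ge0 _) (le_a_c i).
Qed.

Theorem lemma4p4 (R : rcfType) (k : nat) (hk : (2 <= k)%N)
  (dus dvs : 'I_k -> R) :
  feasible dus -> feasible dvs ->
  exists au av : 'I_k -> R,
    norm2 au <= Num.sqrt (k%:R / 2) /\ norm2 av <= Num.sqrt (k%:R / 2) /\
    forall du dv : 'I_k -> R, feasible du -> feasible dv ->
      obj au av dus dvs <= obj au av du dv.
Proof.
move=> _ _.
pose s i := Num.sg (dus i - dvs i).
have half_weight_norm (c : 'I_k -> R) : (forall i, `|c i| <= 1) ->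
    norm2 (fun i => c i / 2) <= Num.sqrt (k%:R / 2).
  move=> le_c1; apply: le_trans (@norm2_le_const _ _ _ 2^-1 _) _.
    by move=> i; rewrite normrM normfV normr_nat ler_piMl ?invr_ge0 ?ler0n.
  by rewrite ler_wsqrtr //; have := ler0n R k; lra.
exists (fun i => - s i / 2), (fun i => s i / 2); split; last split.
- by apply: (half_weight_norm (fun i => - s i)) => i; rewrite normrN norm_sgr_le1.
- by apply: half_weight_norm => i; apply: norm_sgr_le1.
- move=> du dv _ _; rewrite !objE; apply: ler_sum => i _.
  exact/subgradient_weights_minimize/normrEsg/norm_sgr_le1.
Qed.
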